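(* Let $G$ be a finite non-abelian group and $C\le G$ a subgroup such that: $C=\langle c\rangle$ is cyclic of order a power of a prime $r$; $C$ is characteristic in $G$; $C\cap Z(G)=\{1\}$; and some $a\in G$ induces by conjugation on $C$ an automorphism whose order is not a power of $r$. Let $\gamma$ be a gamma function on $G$ and suppose there is a function $\sigma:C\to C$ with $\gamma(x)=\iota\big((x^{\sigma})^{-1}\big)$ for every $x\in C$. Then either $\gamma(x)=1$ for all $x\in C$ (i.e. $C\le\ker(\gamma)$), or $\gamma(x)=\iota(x^{-1})$ for all $x\in C$, in which case $C\le\ker(\tilde\gamma)$, where $\tilde\gamma(x)=\gamma(x^{-1})\iota(x^{-1})$.
   Context: Maps act on the right, written exponentially; $\iota(g)\in\mathrm{Aut}(G)$ is $x\mapsto g^{-1}xg$. A gamma function on $G$ is a map $\gamma:G\to\mathrm{Aut}(G)$ with $\gamma(g^{\gamma(h)}h)=\gamma(g)\gamma(h)$ for all $g,h\in G$; $\ker(\gamma)=\{g:\gamma(g)=1\}$. The map $\tilde\gamma$ is again a gamma function. *)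

From mathcomp Require Import all_boot all_fingroup all_solvable.
Set Implicit Arguments. Unset Strict Implicit. Unset Printing Implicit Defensive.
Local Open Scope group_scope.

(* Automorphisms of G are permutations in Aut G (identity off G).
   MathComp permutations compose left-to-right ((s * t) x = t (s x)),
   matching the paper's right-action convention.  The application
   γ h g is the paper's g^{γ(h)}. *)
Definition gamma_fun (gT : finGroupType) (G : {group gT})
    (gamma : gT -> {perm gT}) : Prop :=
  {in G, forall g, gamma g \in Aut G} /\
  {in G &, forall g h, gamma (gamma h g * h) = gamma g * gamma h}.

Definition iota_aut (gT : finGroupType) (G : {group gT}) (g : gT) : {perm gT} :=
  conj_aut G g.

Definition gamma_tilde (gT : finGroupType) (G : {group gT})
    (gamma : gT -> {perm gT}) (x : gT) : {perm gT} :=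
  gamma x^-1 * iota_aut G x^-1.

From mathcomp Require Import all_boot all_fingroup all_solvable.

Set Implicit Arguments.
Unset Strict Implicit.
Unset Printing Implicit Defensive.

Local Open Scope group_scope.

(* Write gamma = iota o tau on C, where tau x = (sigma x)^-1.  Because
   C :&: 'Z(G) = 1, an element of C is determined by the inner automorphism
   it induces, so the gamma law on the abelian group C makes tau an
   endomorphism of the cyclic group C, i.e. tau x = x ^+ k.  Comparing the
   gamma law at two suitable pairs involving a^-1, for an arbitrary a in G,
   shows that every y ^+ (k * k.+1) with y in C is central, hence trivial.
   As #|C| is a power of r it divides k or k.+1: then gamma = 1 on C, or
   tau x = x^-1 on C. *)

Lemma cycle_endo_expg (gT : finGroupType) (c : gT) (f : gT -> gT) :
    {in <[c]> &, {morph f : x y / x * y}} -> f c \in <[c]> ->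
  exists k, {in <[c]>, forall x, f x = x ^+ k}.
Proof.
move=> fM /cycleP[k fc]; exists k => _ /cycleP[i ->].
by have /= -> := morphX (Morphism fM) i (cycle_id c); rewrite fc -!expgM mulnC.
Qed.

Lemma aut_char_mem (gT : finGroupType) (G C : {group gT}) (al : {perm gT}) x :
  C \char G -> al \in Aut G -> x \in C -> al x \in C.
Proof.
move=> chC AutG_al Cx; have /charP[sCG charC] := chC.
rewrite -(autmE AutG_al) -(charC _ (injm_autm AutG_al) (im_autm AutG_al)).
by rewrite mem_morphim // (subsetP sCG).
Qed.

Lemma autJ (gT : finGroupType) (G : {group gT}) (al : {perm gT}) u v :
  al \in Aut G -> u \in G -> v \in G -> al (u ^ v) = al u ^ al v.
Proof. by move=> AutG_al Gu Gv; rewrite -!(autmE AutG_al) morphJ. Qed.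

Lemma conj_eq_center_free (gT : finGroupType) (G C : {group gT}) :
    C \subset G -> C :&: 'Z(G) = 1 ->
  {in C &, forall u v, {in G, forall z, z ^ u = z ^ v} -> u = v}.
Proof.
move=> sCG tiCZ u v Cu Cv uv; apply/eqP; rewrite eq_mulgV1; apply/eqP/set1gP.
have Cw : u * v^-1 \in C by rewrite groupM ?groupV.
rewrite -tiCZ inE Cw inE (subsetP sCG) //=.
apply/centP=> z Gz; apply/esym/commgP/conjg_fixP.
by rewrite conjgM uv // conjgK.
Qed.

Section InnerGammaOnCharSubgroup.

Variables (gT : finGroupType) (G C : {group gT}).
Variables (gamma : gT -> {perm gT}) (tau : gT -> gT).
Hypotheses (chC : C \char G) (tiCZ : C :&: 'Z(G) = 1) (cCC : abelian C).
Hypotheses (gammaG : gamma_fun G gamma) (tauC : {in C, forall x, tau x \in C}).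
Hypothesis gammaC : {in C, forall x, gamma x = iota_aut G (tau x)}.

Let sCG : C \subset G := char_sub chC.
Let inG := subsetP sCG.

Lemma tau_morph : {in C &, {morph tau : x y / x * y}}.
Proof.
have [_ gammaM] := gammaG.
move=> x y Cx Cy; have Cxy := groupM Cx Cy.
have gamma_yx : gamma y x = x.
  rewrite gammaC // conj_autE ?inG ?tauC //.
  by rewrite /conjg -(centsP cCC _ (tauC Cy) _ Cx) mulKg.
have eq_conj : conj_aut G (tau (x * y)) = conj_aut G (tau x * tau y).
  rewrite -[LHS]/(iota_aut G _) -gammaC // -{1}gamma_yx gammaM ?inG //.
  by rewrite !gammaC // /iota_aut conj_aut_morphM ?(subsetP (normG G)) ?inG ?tauC.
apply: (conj_eq_center_free sCG tiCZ); rewrite ?groupM ?tauC //.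
by move=> z Gz; rewrite -!(@conj_autE _ G) ?eq_conj // inG ?groupM ?tauC.
Qed.

Lemma tau_expg (c : gT) : C :=: <[c]> -> exists k, {in C, forall x, tau x = x ^+ k}.
Proof.
move=> defC; rewrite defC; apply: cycle_endo_expg; rewrite -defC.
  exact: tau_morph.
by rewrite tauC // defC cycle_id.
Qed.

Variable k : nat.
Hypothesis tauX : {in C, forall x, tau x = x ^+ k}.

Lemma expg_tau_conj_fixed a y :
  a \in G -> y \in C -> (y ^+ (k * k.+1)) ^ a = y ^+ (k * k.+1).
Proof.
move=> Ga Cy; have [AutG_gamma gammaM] := gammaG.
have Gai : a^-1 \in G by rewrite groupV.
set al := gamma a^-1; have Aal : al \in Aut G := AutG_gamma _ Gai.
set t := y ^+ k; have Ct : t \in C by rewrite groupX.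
have Na : a \in 'N(C) := subsetP (char_norm chC) a Ga.
set w := t^-1 * (t * y) ^ a.
have Cw : w \in C by rewrite groupM ?groupV // memJ_norm // groupM.
(* x is chosen so that the gamma law at (x, a^-1) and at (a^-1, y) have
   equal left-hand sides. *)
set x := al^-1 w; have Cx : x \in C by rewrite (aut_char_mem chC) ?groupV.
have al_x : al x = w by rewrite permKV.
have al_conj : iota_aut G (tau x) * al = al * iota_aut G t.
  rewrite /t -tauX // -!gammaC // -!gammaM ?Gai ?inG //; congr gamma.
  rewrite al_x gammaC // tauX // conj_autE ?Gai ?inG //.
  by rewrite /w !conjgE !mulgA mulgK.
have al_tau_x : al (tau x) = t.
  apply: (conj_eq_center_free sCG tiCZ); rewrite ?(aut_char_mem chC) ?tauC // => z Gz.
  have Gz' : al^-1 z \in G by rewrite Aut_closed ?groupV.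
  have := congr1 (fun p : {perm gT} => p (al^-1 z)) al_conj.
  rewrite !permM permKV /iota_aut !conj_autE ?Gz ?Gz' ?inG ?tauC //.
  by rewrite (autJ Aal) ?Gz' ?inG ?tauC // permKV.
have w_k : w ^+ k = t.
  rewrite -al_x; have := morphX (autm Aal) k (inG Cx); rewrite !autmE => <-.
  by rewrite -tauX.
have cCw : commute t^-1 ((t * y) ^ a).
  by apply: (centsP cCC); rewrite ?groupV // memJ_norm // groupM.
move: w_k; rewrite /w expgMn // expgVn => /(canRL (mulKVg _)).
by rewrite -conjXg /t -expgSr -!expgM -expgD -mulnSr [(k.+1 * k)%N]mulnC.
Qed.

Lemma expg_tau_trivial y : y \in C -> y ^+ (k * k.+1) = 1.
Proof.
move=> Cy; have Cyk := groupX (k * k.+1) Cy.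
apply/set1gP; rewrite -tiCZ inE Cyk inE inG //=.
by apply/centP=> a Ga; apply/commgP/conjg_fixP; apply: expg_tau_conj_fixed.
Qed.

End InnerGammaOnCharSubgroup.

Lemma pnat_dvdn_mul_succ p d k :
  prime p -> p.-nat d -> d %| k * k.+1 -> (d %| k) || (d %| k.+1).
Proof.
move=> p_pr /p_natP[n ->] dvd_d.
have [p_k | p'k] := boolP (p %| k).
  have p'k1 : coprime (p ^ n) k.+1.
    rewrite coprimeXl // prime_coprime // -addn1 dvdn_addr // dvdn1.
    by rewrite neq_ltn prime_gt1 ?orbT.
  by rewrite -(@Gauss_dvdl _ k _ p'k1) dvd_d.
have p'k_n : coprime (p ^ n) k by rewrite coprimeXl // prime_coprime.
by rewrite -(@Gauss_dvdr _ _ k.+1 p'k_n) dvd_d orbT.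
Qed.

Theorem mainTheorem11 (gT : finGroupType) (G C : {group gT}) (c a : gT)
    (r : nat) (gamma : gT -> {perm gT}) (sigma : gT -> gT) :
  ~~ abelian G ->
  prime r ->
  C :=: <[c]> ->
  r.-group C ->
  C \char G ->
  C :&: 'Z(G) = 1 ->
  a \in G ->
  ~~ r.-elt (conj_aut C a) ->
  gamma_fun G gamma ->
  {in C, forall x, sigma x \in C} ->
  {in C, forall x, gamma x = iota_aut G (sigma x)^-1} ->
  {in C, forall x, gamma x = 1} \/
  ({in C, forall x, gamma x = iota_aut G x^-1} /\
   {in C, forall x, gamma_tilde G gamma x = 1}).
Proof.
move=> _ r_pr defC rC chC tiCZ _ _ gammaG sigmaC gammaC.
pose tau x := (sigma x)^-1.
have tauC : {in C, forall x, tau x \in C} by move=> x Cx; rewrite groupV sigmaC.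
have cCC : abelian C by rewrite defC cycle_abelian.
have [k tauX] := tau_expg chC tiCZ cCC gammaG tauC gammaC defC.
have expC1 n : #|C| %| n -> {in C, forall y, y ^+ n = 1}.
  by move=> /dvdnP[q ->] y Cy; rewrite mulnC expgM expg_cardG ?expg1n.
have Cc : c \in C by rewrite defC cycle_id.
have C_kk1 : #|C| %| k * k.+1.
  rewrite defC -/(order c) order_dvdn.
  by rewrite (expg_tau_trivial chC tiCZ cCC gammaG tauC gammaC tauX Cc).
have inG := subsetP (char_sub chC).
case/orP: (pnat_dvdn_mul_succ r_pr rC C_kk1) => [C_k | C_k1]; [left | right].
  by move=> y Cy; rewrite gammaC // -/(tau y) tauX // expC1 // /iota_aut morph1.
have tauV : {in C, forall y, tau y = y^-1}.
  by move=> y Cy; rewrite tauX //; apply: (mulIg y); rewrite -expgSr expC1 ?mulVg.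
split=> y Cy; first by rewrite gammaC // -/(tau y) tauV.
rewrite /gamma_tilde gammaC ?groupV // -/(tau _) tauV ?groupV // invgK /iota_aut.
by rewrite -conj_aut_morphM ?(subsetP (normG G)) ?inG ?groupV // mulgV morph1.
Qed.
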